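(* Let $\mathcal{C}$ be an idempotent complete preadditive category that has weak kernels and weak cokernels, and let $n$ be a nonnegative integer. Then $\mathcal{C}$ has $n$-kernels if and only if $\mathcal{C}$ has $n$-cokernels.
   Context: A preadditive category is idempotent complete if every idempotent $e : X \to X$ splits, i.e. there are morphisms $f : Y \to X$ and $g : X \to Y$ with $fg = e$ and $gf = 1_Y$. A weak kernel of $f : A \to B$ is a morphism $k : K \to A$ with $fk = 0$ such that every $u : U \to A$ with $fu = 0$ factors (not necessarily uniquely) as $u = kv$; weak cokernels are defined dually. $\mathcal{C}$ has weak kernels (resp. weak cokernels) if every morphism has one. For $n \geqslant 1$: an $n$-kernel of a morphism $f : A \to A'$ is a sequence of morphisms $B_1 \xrightarrow{b_1} B_2 \xrightarrow{b_2} \cdots \xrightarrow{b_{n-1}} B_n \xrightarrow{b_n} A$ such that for every object $X$ the sequence of abelian groups $0 \to \mathcal{C}(X,B_1) \to \cdots \to \mathcal{C}(X,B_n) \to \mathcal{C}(X,A) \to \mathcal{C}(X,A')$ (induced by composition) is exact; equivalently, $b_1$ is a monomorphism, $b_i$ is a weak kernel of $b_{i+1}$ for $1 \leqslant i \leqslant n-1$, and $b_n$ is a weak kernel of $f$. Dually, an $n$-cokernel of $f : A \to A'$ is a sequence $A' \xrightarrow{c_0} C_1 \xrightarrow{c_1} \cdots \xrightarrow{c_{n-1}} C_n$ such that for every object $X$ the sequence $0 \to \mathcal{C}(C_n,X) \to \cdots \to \mathcal{C}(C_1,X) \to \mathcal{C}(A',X) \to \mathcal{C}(A,X)$ is exact;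 equivalently, $c_{n-1}$ is an epimorphism, $c_0$ is a weak cokernel of $f$ and $c_i$ is a weak cokernel of $c_{i-1}$ for $1 \leqslant i \leqslant n-1$. For $n = 0$: a $0$-kernel of $f : A \to A'$ is a monomorphism $b : B \to A'$ such that $f = bc$ for some split epimorphism $c : A \to B$; a $0$-cokernel of $f$ is an epimorphism $e : A \to C$ such that $f = se$ for some split monomorphism $s : C \to A'$. $\mathcal{C}$ has $n$-kernels (resp. $n$-cokernels) if every morphism in $\mathcal{C}$ has an $n$-kernel (resp. $n$-cokernel). *)

From HB Require Import structures.
From mathcomp Require Import all_boot all_algebra.
Set Implicit Arguments. Unset Strict Implicit. Unset Printing Implicit Defensive.
Import GRing.Theory.
Local Open Scope ring_scope.

Record PreAdd := {
  Obj : Type;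
  Hom : Obj -> Obj -> zmodType;
  comp : forall X Y Z : Obj, Hom Y Z -> Hom X Y -> Hom X Z;
  idm : forall X : Obj, Hom X X;
  compA : forall (W X Y Z : Obj) (h : Hom Y Z) (g : Hom X Y) (f : Hom W X),
      comp h (comp g f) = comp (comp h g) f;
  comp1l : forall (X Y : Obj) (f : Hom X Y), comp (idm Y) f = f;
  comp1r : forall (X Y : Obj) (f : Hom X Y), comp f (idm X) = f;
  compDl : forall (X Y Z : Obj) (g1 g2 : Hom Y Z) (f : Hom X Y),
      comp (g1 + g2) f = comp g1 f + comp g2 f;
  compDr : forall (X Y Z : Obj) (g : Hom Y Z) (f1 f2 : Hom X Y),
      comp g (f1 + f2) = comp g f1 + comp g f2
}.

Arguments comp {p X Y Z}.
Arguments idm {p}.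

Section Defs.
Variable C : PreAdd.

Definition mono {X Y : Obj C} (f : Hom X Y) : Prop :=
  forall (W : Obj C) (u v : Hom W X), comp f u = comp f v -> u = v.

Definition epi {X Y : Obj C} (f : Hom X Y) : Prop :=
  forall (W : Obj C) (u v : Hom Y W), comp u f = comp v f -> u = v.

Definition split_epi {X Y : Obj C} (f : Hom X Y) : Prop :=
  exists s : Hom Y X, comp f s = idm Y.

Definition split_mono {X Y : Obj C} (f : Hom X Y) : Prop :=
  exists r : Hom Y X, comp r f = idm X.

Definition idempotent_complete : Prop :=
  forall (X : Obj C) (e : Hom X X), comp e e = e ->
    exists (Y : Obj C) (f : Hom Y X) (g : Hom X Y), comp f g = e /\ comp g f = idm Y.

Definition weak_kernel {A B K : Obj C} (f : Hom A B) (k : Hom K A) : Prop :=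
  comp f k = 0 /\
  forall (U : Obj C) (u : Hom U A), comp f u = 0 -> exists v : Hom U K, u = comp k v.

Definition weak_cokernel {A B Q : Obj C} (f : Hom A B) (c : Hom B Q) : Prop :=
  comp c f = 0 /\
  forall (U : Obj C) (u : Hom B U), comp u f = 0 -> exists v : Hom Q U, u = comp v c.

Definition has_weak_kernels : Prop :=
  forall (A B : Obj C) (f : Hom A B), exists (K : Obj C) (k : Hom K A), weak_kernel f k.

Definition has_weak_cokernels : Prop :=
  forall (A B : Obj C) (f : Hom A B), exists (Q : Obj C) (c : Hom B Q), weak_cokernel f c.

(* kernel_tail m b : there are B_1 -b_1-> ... -> B_m -b_m-> B with b_i a weak
   kernel of b_{i+1}, b_m a weak kernel of b, and the first map of the whole
   chain (b_1, or b itself if m = 0) a monomorphism. *)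
Fixpoint kernel_tail (m : nat) {B A : Obj C} (b : Hom B A) : Prop :=
  match m with
  | 0 => mono b
  | m'.+1 => exists (B' : Obj C) (b' : Hom B' B), weak_kernel b b' /\ kernel_tail m' b'
  end.

(* dual: c : A -> Q followed by Q -> C_1 -> ... -> C_m, each map a weak cokernel
   of the previous one, the last map of the whole chain an epimorphism. *)
Fixpoint cokernel_tail (m : nat) {A Q : Obj C} (c : Hom A Q) : Prop :=
  match m with
  | 0 => epi c
  | m'.+1 => exists (Q' : Obj C) (c' : Hom Q Q'), weak_cokernel c c' /\ cokernel_tail m' c'
  end.

Definition has_nkernel (n : nat) {A A' : Obj C} (f : Hom A A') : Prop :=
  match n with
  | 0 => exists (B : Obj C) (b : Hom B A') (c : Hom A B),
           mono b /\ split_epi c /\ f = comp b c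
  | n'.+1 => exists (B : Obj C) (b : Hom B A), weak_kernel f b /\ kernel_tail n' b
  end.

Definition has_ncokernel (n : nat) {A A' : Obj C} (f : Hom A A') : Prop :=
  match n with
  | 0 => exists (Q : Obj C) (e : Hom A Q) (s : Hom Q A'),
           epi e /\ split_mono s /\ f = comp s e
  | n'.+1 => exists (Q : Obj C) (c : Hom A' Q), weak_cokernel f c /\ cokernel_tail n' c
  end.

Definition has_nkernels (n : nat) : Prop :=
  forall (A A' : Obj C) (f : Hom A A'), has_nkernel n f.

Definition has_ncokernels (n : nat) : Prop :=
  forall (A A' : Obj C) (f : Hom A A'), has_ncokernel n f.

End Defs.

(* Let y be a weak cokernel of d : X -> E.  Any e : E -> E with e d = d and y e = 0
   is idempotent; splitting it as e = i p, the map p d is an epimorphism with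
   d = i (p d), hence an epimorphic weak cokernel of whatever d is a weak cokernel
   of.  An n-kernel of y provides such an e: for n = 0 it is 1 - r c, where
   y = b c and c r = 1; for n > 0 it is b t, where d = b s factors through the
   weak kernel b of y and t comes from comparing the Hom-exact chain of weak
   kernels ending in b with the chain of iterated weak cokernels ending in d.
   Iterating weak cokernels and closing with such an epimorphic one yields
   n-cokernels; the converse is the same statement in the opposite category. *)
From mathcomp Require Import all_boot all_algebra.
Set Implicit Arguments. Unset Strict Implicit. Unset Printing Implicit Defensive.
Import GRing.Theory.
Local Open Scope ring_scope.

Section Preadditive.
Variable C : PreAdd.

Lemma comp0l (X Y Z : Obj C) (f : Hom X Y) : comp (0 : Hom Y Z) f = 0.
Proof. by apply: (@addIr _ (comp 0 f)); rewrite -compDl !add0r. Qed.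

Lemma comp0r (X Y Z : Obj C) (g : Hom Y Z) : comp g (0 : Hom X Y) = 0.
Proof. by apply: (@addIr _ (comp g 0)); rewrite -compDr !add0r. Qed.

Lemma compNl (X Y Z : Obj C) (g : Hom Y Z) (f : Hom X Y) : comp (- g) f = - comp g f.
Proof. by apply: (@addIr _ (comp g f)); rewrite -compDl !addNr comp0l. Qed.

Lemma compNr (X Y Z : Obj C) (g : Hom Y Z) (f : Hom X Y) : comp g (- f) = - comp g f.
Proof. by apply: (@addIr _ (comp g f)); rewrite -compDr !addNr comp0r. Qed.

Lemma compBl (X Y Z : Obj C) (g1 g2 : Hom Y Z) (f : Hom X Y) :
  comp (g1 - g2) f = comp g1 f - comp g2 f.
Proof. by rewrite compDl compNl. Qed.

Lemma compBr (X Y Z : Obj C) (g : Hom Y Z) (f1 f2 : Hom X Y) :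
  comp g (f1 - f2) = comp g f1 - comp g f2.
Proof. by rewrite compDr compNr. Qed.

Fixpoint weak_cokernel_chain (m : nat) {W X : Obj C} (x : Hom W X) : Prop :=
  match m with
  | 0 => True
  | m'.+1 => exists (V : Obj C) (x' : Hom V W), weak_cokernel x' x /\ weak_cokernel_chain m' x'
  end.

Lemma kernel_tail_lift (m : nat) (B Z W X X' : Obj C) (b : Hom B Z) (x' : Hom W X)
    (x : Hom X X') (s : Hom X B) :
  kernel_tail m b -> weak_cokernel x' x -> weak_cokernel_chain m x' ->
  comp b (comp s x') = 0 ->
  exists t : Hom X' B, comp b (comp t x) = comp b s.
Proof.
elim: m B Z W X X' b x' x s
  => [|m IH] B Z W X X' b x' x s /= b_tail [xx'0 x_univ] x'_chain bsx'0.
  have sx'0 : comp s x' = 0 by apply: b_tail; rewrite bsx'0 comp0r.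
  by have [t ->] := x_univ _ s sx'0; exists t.
case: b_tail => [B' [b' [[bb'0 b'_univ] b'_tail]]].
case: x'_chain => [V [x'' [x'_coker x''_chain]]].
have [s' sx'E] := b'_univ _ (comp s x') bsx'0.
have b's'x''0 : comp b' (comp s' x'') = 0.
  by rewrite compA -sx'E -compA x'_coker.1 comp0r.
have [t' b't'x'E] := IH _ _ _ _ _ b' x'' x' s' b'_tail x'_coker x''_chain b's'x''0.
have : comp (s - comp b' t') x' = 0 by rewrite compBl -compA b't'x'E sx'E subrr.
case/x_univ => t tE; exists t.
by rewrite -tE compBr compA bb'0 comp0l subr0.
Qed.

Lemma weak_cokernel_idempotent (X E Y : Obj C) (d : Hom X E) (y : Hom E Y) (e : Hom E E) :
  weak_cokernel d y -> comp e d = d -> comp y e = 0 -> comp e e = e.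
Proof.
move=> [_ y_univ] edE ye0.
have : comp (idm E - e) d = 0 by rewrite compBl comp1l edE subrr.
case/y_univ => v vE.
have : comp (idm E - e) e = 0 by rewrite vE -compA ye0 comp0r.
by rewrite compBl comp1l => /subr0_eq.
Qed.

Lemma epi_factor_of_idempotent (X E Y : Obj C) (d : Hom X E) (y : Hom E Y) (e : Hom E E) :
  idempotent_complete C -> weak_cokernel d y -> comp e d = d -> comp y e = 0 ->
  exists (P : Obj C) (i : Hom P E) (p : Hom E P),
    comp p i = idm P /\ comp i (comp p d) = d /\ epi (comp p d).
Proof.
move=> Cic y_coker edE ye0.
have [P [i [p [ipE piE]]]] := Cic _ e (weak_cokernel_idempotent y_coker edE ye0).
exists P, i, p; split=> //; split; first by rewrite compA ipE.
move=> U u1 u2 u12E.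
have : comp (comp (u1 - u2) p) d = 0 by rewrite -compA compBl u12E subrr.
case/y_coker.2 => w wE.
have u12pe : comp (comp (u1 - u2) p) e = comp (u1 - u2) p.
  by rewrite -ipE compA -(compA _ p i) piE comp1r.
have u12p0 : comp (u1 - u2) p = 0 by rewrite -u12pe wE -compA ye0 comp0r.
apply: subr0_eq.
by rewrite -(comp1r (u1 - u2)) -piE compA u12p0 comp0l.
Qed.

Lemma weak_cokernel_retract (W X E P : Obj C) (x : Hom W X) (d : Hom X E) (i : Hom P E)
    (p : Hom E P) :
  weak_cokernel x d -> comp i (comp p d) = d -> weak_cokernel x (comp p d).
Proof.
move=> [dx0 d_univ] ipdE; split; first by rewrite -compA dx0 comp0r.
by move=> U u /d_univ [w ->]; exists (comp w i); rewrite -compA ipdE.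
Qed.

End Preadditive.

Section NkernelsToNcokernels.
Variable C : PreAdd.
Hypothesis Cic : idempotent_complete C.
Hypothesis Cwc : has_weak_cokernels C.

Lemma epi_weak_cokernel (m : nat) (W X E : Obj C) (x : Hom W X) (d : Hom X E) :
  has_nkernels C m.+1 -> weak_cokernel x d -> weak_cokernel_chain m x ->
  exists (P : Obj C) (d' : Hom X P), weak_cokernel x d' /\ epi d'.
Proof.
move=> Cnk d_coker x_chain.
have [Y [y y_coker]] := Cwc d.
have [B [b [[yb0 b_univ] b_tail]]] := Cnk _ _ y.
have [s dE] := b_univ _ d y_coker.1.
have bsx0 : comp b (comp s x) = 0 by rewrite compA -dE d_coker.1.
have [t btdE] := kernel_tail_lift b_tail d_coker x_chain bsx0.
have btdE' : comp (comp b t) d = d by rewrite -compA btdE -dE.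
have ybt0 : comp y (comp b t) = 0 by rewrite compA yb0 comp0l.
have [P [i [p [_ [ipdE pd_epi]]]]] := epi_factor_of_idempotent Cic y_coker btdE' ybt0.
by exists P, (comp p d); split; first exact: weak_cokernel_retract d_coker ipdE.
Qed.

Lemma weak_cokernel_chain_cokernel_tail (n j k : nat) (W X : Obj C) (x : Hom W X) :
  has_nkernels C n.+1 -> (k + j)%N = n -> weak_cokernel_chain k x ->
  exists (Q : Obj C) (c : Hom X Q), weak_cokernel x c /\ cokernel_tail j c.
Proof.
move=> Cnk; elim: j k W X x => [|j IH] k W X x kjE x_chain;
  have [E [d d_coker]] := Cwc x.
  by rewrite addn0 in kjE; subst k; exact: epi_weak_cokernel Cnk d_coker x_chain.
have d_chain : weak_cokernel_chain k.+1 d by exists W, x.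
have kjE' : (k.+1 + j)%N = n by rewrite addSnnS.
have [Q [c [c_coker c_tail]]] := IH k.+1 _ _ d kjE' d_chain.
by exists E, d; split=> //; exists Q, c.
Qed.

Lemma has_nkernels_ncokernels (n : nat) : has_nkernels C n -> has_ncokernels C n.
Proof.
case: n => [|n] Cnk A A' f; last first.
  have [Q [c [c_coker c_tail]]] := weak_cokernel_chain_cokernel_tail (x := f) Cnk (add0n n) I.
  by exists Q, c.
have [Y [y y_coker]] := Cwc f.
have [B [b [c [b_mono [[r crE] ybcE]]]]] := Cnk _ _ y.
have cf0 : comp c f = 0 by apply: b_mono; rewrite compA -ybcE y_coker.1 comp0r.
have ef : comp (idm A' - comp r c) f = f by rewrite compBl comp1l -compA cf0 comp0r subr0.
have ye0 : comp y (idm A' - comp r c) = 0.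
  by rewrite compBr comp1r ybcE compA -(compA b c r) crE comp1r subrr.
have [P [i [p [piE [ipfE pf_epi]]]]] := epi_factor_of_idempotent Cic y_coker ef ye0.
by exists P, (comp p f), i; split=> //; split; first exists p.
Qed.

End NkernelsToNcokernels.

Definition opposite (C : PreAdd) : PreAdd :=
  @Build_PreAdd (Obj C) (fun X Y => Hom Y X) (fun X Y Z g f => comp f g) (@idm C)
    (fun W X Y Z h g f => esym (compA f g h))
    (fun X Y f => comp1r f) (fun X Y f => comp1l f)
    (fun X Y Z g1 g2 f => compDr f g1 g2) (fun X Y Z g f1 f2 => compDl f1 f2 g).

Section Duality.
Variable C : PreAdd.

Lemma idempotent_complete_op : idempotent_complete C -> idempotent_complete (opposite C).
Proof. by move=> Cic X e ee; have [Y [f [g [fgE gfE]]]] := Cic X e ee; exists Y, g, f. Qed.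

Lemma has_weak_cokernels_op : has_weak_kernels C -> has_weak_cokernels (opposite C).
Proof. by move=> Cwk A B f; exact: Cwk B A f. Qed.

Lemma kernel_tail_op (m : nat) (A Q : Obj C) (c : Hom A Q) :
  cokernel_tail m c -> kernel_tail m (c : Hom (p := opposite C) Q A).
Proof.
elim: m A Q c => [|m IH] A Q c //= [Q' [c' [c'_coker c'_tail]]].
by exists Q', c'; split; last exact: IH.
Qed.

Lemma kernel_tail_of_op (m : nat) (A Q : Obj C) (c : Hom (p := opposite C) A Q) :
  cokernel_tail m c -> kernel_tail m (c : Hom Q A).
Proof.
elim: m A Q c => [|m IH] A Q c //= [Q' [c' [c'_coker c'_tail]]].
by exists Q', c'; split; last exact: IH.
Qed.

Lemma has_nkernels_op (n : nat) : has_ncokernels C n -> has_nkernels (opposite C) n.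
Proof.
case: n => [|n] Cnc A A' f; first exact: Cnc A' A f.
have [Q [c [c_coker c_tail]]] := Cnc A' A f.
by exists Q, c; split; last exact: kernel_tail_op.
Qed.

Lemma has_nkernels_of_op (n : nat) : has_ncokernels (opposite C) n -> has_nkernels C n.
Proof.
case: n => [|n] Cnc A A' f; first exact: Cnc A' A f.
have [Q [c [c_coker c_tail]]] := Cnc A' A f.
by exists Q, c; split; last exact: kernel_tail_of_op.
Qed.

End Duality.

Theorem theorem1 (C : PreAdd) (n : nat) :
  idempotent_complete C -> has_weak_kernels C -> has_weak_cokernels C ->
  (has_nkernels C n <-> has_ncokernels C n).
Proof.
move=> Cic Cwk Cwc; split; first exact: has_nkernels_ncokernels.
move=> /has_nkernels_op Cop_nk; apply: has_nkernels_of_op.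
exact: has_nkernels_ncokernels (idempotent_complete_op Cic) (has_weak_cokernels_op Cwk) _ Cop_nk.
Qed.
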